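(* Let $\mathbf{X}$ be an observation generated under one of two hypotheses $\mathrm{H}_0,\mathrm{H}_1$ with prior probabilities $P(\mathrm{H}_0),P(\mathrm{H}_1)$; under $\mathrm{H}_i$ a random parameter $\Theta_i\in\Lambda_i\subseteq\mathbb{R}$ has known prior density $p(\theta_i\mid\mathrm{H}_i)$. Let non-negative coefficients $\lambda_i,\mu_i$, $i\in\{0,1\}$, be given, and fixed families of densities $p^{\mathrm D}_{i,\theta_i}$ and $p^{\mathrm E}_{i,\theta_i}$, $i\in\{0,1\}$, $\theta_i\in\Lambda_i$. Then the policy $\pi^\star=(\delta^\star,\hat\theta_0^\star,\hat\theta_1^\star)$ minimizing $$J^{\mathrm{NP}}_{\mathrm u}(\pi)=\sum_{i=0}^1P(\mathrm{H}_i)\bigl(\lambda_i\alpha_i(\pi,p^{\mathrm D}_{i,\theta_i})+\mu_i\beta_i(\pi,p^{\mathrm E}_{i,\theta_i})\bigr)$$ is given by $$\delta^\star(\mathbf{x})=\begin{cases}0,&D_0^{\mathrm{NP}}(\mathbf{x})<D_1^{\mathrm{NP}}(\mathbf{x}),\\ \kappa\in[0,1],&D_0^{\mathrm{NP}}(\mathbf{x})=D_1^{\mathrm{NP}}(\mathbf{x}),\\ 1,&D_0^{\mathrm{NP}}(\mathbf{x})>D_1^{\mathrm{NP}}(\mathbf{x}),\end{cases}\qquad \hat\theta_i^\star(\mathbf{x})=\mathbb{E}_{p^{\mathrm E}_{i,\theta_i}}[\Theta_i\mid\mathrm{H}_i,\mathbf{x}],$$ with $$D_i^{\mathrm{NP}}(\mathbf{x})=P(\mathrm{H}_{1-i})\lambda_{1-i}\,p^{\mathrm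 D}(\mathbf{x}\mid\mathrm{H}_{1-i})+P(\mathrm{H}_i)\mu_i\,\mathrm{Var}_{p^{\mathrm E}_{i,\theta_i}}[\Theta_i\mid\mathrm{H}_i,\mathbf{x}]\,p^{\mathrm E}(\mathbf{x}\mid\mathrm{H}_i).$$ Moreover, $J^{\mathrm{NP}}_{\mathrm u}(\pi^\star)=\int\min\{D_0^{\mathrm{NP}}(\mathbf{x}),D_1^{\mathrm{NP}}(\mathbf{x})\}\,\mathrm{d}\mathbf{x}$.
   Context: A policy $\pi=(\delta,\hat\theta_0,\hat\theta_1)$ consists of a randomized decision rule $\delta$ mapping observations to $[0,1]$ (probability of accepting $\mathrm{H}_1$) and estimators $\hat\theta_i$ with values in $\Lambda_i$. Error probabilities computed with the densities $p^{\mathrm D}$: $\alpha_0(\pi,p^{\mathrm D}_{0,\theta_0})=\iint\delta(\mathbf{x})p^{\mathrm D}_{0,\theta_0}(\mathbf{x})p(\theta_0\mid\mathrm{H}_0)\mathrm{d}\mathbf{x}\mathrm{d}\theta_0$, $\alpha_1(\pi,p^{\mathrm D}_{1,\theta_1})=\iint(1-\delta(\mathbf{x}))p^{\mathrm D}_{1,\theta_1}(\mathbf{x})p(\theta_1\mid\mathrm{H}_1)\mathrm{d}\mathbf{x}\mathrm{d}\theta_1$. Estimation errors computed with the densities $p^{\mathrm E}$: $\beta_0=\iint(1-\delta)(\hat\theta_0-\theta_0)^2p^{\mathrm E}_{0,\theta_0}(\mathbf{x})p(\theta_0\mid\mathrm{H}_0)\mathrm{d}\mathbf{x}\mathrm{d}\theta_0$,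 $\beta_1=\iint\delta(\hat\theta_1-\theta_1)^2p^{\mathrm E}_{1,\theta_1}(\mathbf{x})p(\theta_1\mid\mathrm{H}_1)\mathrm{d}\mathbf{x}\mathrm{d}\theta_1$. Marginals: $p^{\mathrm D}(\mathbf{x}\mid\mathrm{H}_i)=\int p^{\mathrm D}_{i,\theta_i}(\mathbf{x})p(\theta_i\mid\mathrm{H}_i)\mathrm{d}\theta_i$ and similarly $p^{\mathrm E}(\mathbf{x}\mid\mathrm{H}_i)$. Posterior mean and variance $\mathbb{E}_{p^{\mathrm E}_{i,\theta_i}}[\Theta_i\mid\mathrm{H}_i,\mathbf{x}]$, $\mathrm{Var}_{p^{\mathrm E}_{i,\theta_i}}[\Theta_i\mid\mathrm{H}_i,\mathbf{x}]$ are w.r.t. the posterior density $\propto p^{\mathrm E}_{i,\theta_i}(\mathbf{x})p(\theta_i\mid\mathrm{H}_i)$. *)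

From HB Require Import structures.
From mathcomp Require Import all_boot all_order all_algebra.
From mathcomp Require Import all_classical all_reals all_analysis.
Set Implicit Arguments. Unset Strict Implicit. Unset Printing Implicit Defensive.
Import Order.TTheory GRing.Theory Num.Theory.
Import numFieldNormedType.Exports.
Local Open Scope classical_set_scope.
Local Open Scope ring_scope.

(* Conventions: the two hypotheses are indexed by [i : bool],
   [false] = H_0, [true] = H_1, so that "1 - i" is [~~ i].
   Observation space: a measurable type [X] with a sigma-finite reference
   measure [mu] (the "dx").  Parameters live in [R] with Lebesgue measure
   (the "dtheta"). *)

Section Defs.
Context (R : realType) (d : measure_display) (X : measurableType d).
Context (mu : {measure set X -> \bar R}).
Notation leb := (@lebesgue_measure R).

Variables (Lam : bool -> set R) (prior : bool -> R -> R)
          (pD pE : bool -> R -> X -> R).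

Definition wD (i : bool) (delta : X -> R) (x : X) : R :=
  if i then 1 - delta x else delta x.
Definition wE (i : bool) (delta : X -> R) (x : X) : R :=
  if i then delta x else 1 - delta x.

Definition alpha (i : bool) (delta : X -> R) : \bar R :=
  (\int[mu]_x \int[leb]_(t in Lam i)
      (wD i delta x * pD i t x * prior i t)%:E)%E.

Definition beta (i : bool) (delta : X -> R) (thhat : bool -> X -> R) : \bar R :=
  (\int[mu]_x \int[leb]_(t in Lam i)
      (wE i delta x * (thhat i x - t) ^+ 2 * pE i t x * prior i t)%:E)%E.

Definition J_NP (PH lam mu_ : bool -> R)
  (delta : X -> R) (thhat : bool -> X -> R) : \bar R :=
  (\sum_(i : bool) ((PH i * lam i)%:E * alpha i delta
                    + (PH i * mu_ i)%:E * beta i delta thhat))%E.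

(* marginal p^D(x | H_i) (possibly +oo, extended real) *)
Definition margD (i : bool) (x : X) : \bar R :=
  (\int[leb]_(t in Lam i) (pD i t x * prior i t)%:E)%E.

(* marginal p^E(x | H_i) (real-valued; finite under the hypotheses) *)
Definition margE (i : bool) (x : X) : R :=
  \int[leb]_(t in Lam i) (pE i t x * prior i t).

(* posterior mean E_{pE}[Theta_i | H_i, x], posterior density
   proportional to pE_{i,theta}(x) p(theta|H_i) *)
Definition post_mean (i : bool) (x : X) : R :=
  (\int[leb]_(t in Lam i) (t * pE i t x * prior i t)) / margE i x.

Definition post_var (i : bool) (x : X) : R :=
  (\int[leb]_(t in Lam i) ((t - post_mean i x) ^+ 2 * pE i t x * prior i t))
  / margE i x.

Definition D_NP (PH lam mu_ : bool -> R) (i : bool) (x : X) : \bar R :=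
  ((PH (~~ i) * lam (~~ i))%:E * margD (~~ i) x
   + (PH i * mu_ i * post_var i x * margE i x)%:E)%E.

End Defs.

From HB Require Import structures.
From mathcomp Require Import all_boot all_order all_algebra.
From mathcomp Require Import all_classical all_reals all_analysis.
From mathcomp Require Import measurable_realfun.
From mathcomp Require Import lra ring.
Set Implicit Arguments. Unset Strict Implicit. Unset Printing Implicit Defensive.
Import Order.TTheory GRing.Theory Num.Theory.
Import numFieldNormedType.Exports.
Local Open Scope classical_set_scope.
Local Open Scope ring_scope.

(* For fixed x, the integrand of J^NP_u is affine in delta(x):
     delta(x) (P(H_0) lam_0 p^D(x|H_0) + P(H_1) mu_1 Q_1(thhat_1(x)))
     + (1 - delta(x)) (P(H_1) lam_1 p^D(x|H_1) + P(H_0) mu_0 Q_0(thhat_0(x))),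
   where Q_i(c) = int (c - theta)^2 p^E_{i,theta}(x) p(theta|H_i) dtheta.
   Q_i is a quadratic in c, minimised at the posterior mean with minimum
   Var[Theta_i | H_i, x] p^E(x|H_i), so the two brackets are at least D_1^NP(x)
   and D_0^NP(x), with equality for the posterior means.  A convex combination
   of two numbers is at least their minimum, with equality for the threshold
   rule delta^star; integrating over x gives both claims. *)

Section mine_convex.
Context (R : realType) (k : R) (a b : \bar R).
Hypothesis k01 : 0 <= k <= 1.
Local Open Scope ereal_scope.

Let convex_same (c : \bar R) : k%:E * c + (1 - k)%:E * c = c.
Proof.
have /andP[k0 k1] := k01.
by rewrite -ge0_muleDl ?lee_fin ?subr_ge0 // -EFinD addrC subrK mul1e.
Qed.

Lemma mine_le_convex : mine a b <= k%:E * b + (1 - k)%:E * a.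
Proof.
have /andP[k0 k1] := k01.
have [ab|/ltW ba] := leP a b.
- by rewrite -{1}[a]convex_same leeD2r // lee_wpmul2l.
- by rewrite -{1}[b]convex_same leeD2l // lee_wpmul2l // lee_fin subr_ge0.
Qed.

Lemma convex_eq_mine : (a < b -> k = 0%R) -> (b < a -> k = 1%R) ->
  k%:E * b + (1 - k)%:E * a = mine a b.
Proof.
move=> k0 k1; case: ltgtP => [ab|ba|<-].
- by rewrite (k0 ab) mul0e add0e subr0 mul1e.
- by rewrite (k1 ba) mul1e subrr mul0e adde0.
- exact: convex_same.
Qed.

End mine_convex.

Section weighted_moments.
Context (R : realType) (L : set R) (w : R -> R).
Notation leb := (@lebesgue_measure R).

Definition mass := \int[leb]_(t in L) w t.
Definition moment1 := \int[leb]_(t in L) (t * w t).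
Definition moment2 := \int[leb]_(t in L) (t ^+ 2 * w t).
Definition sqdev (c : R) := \int[leb]_(t in L) ((c - t) ^+ 2 * w t).

(* [lebesgue_measure] lives on a copy of [R] whose sigma-algebra is convertible
   to the Borel one; stating measurability there lets the integration lemmas
   unify. *)
Hypothesis mL : measurable (L : set (g_sigma_algebraType R.-ocitv.-measurable)).
Hypothesis w_ge0 : forall t, 0 <= w t.
Hypothesis mw : measurable_fun setT w.
Hypothesis iw : leb.-integrable L (fun t => (w t)%:E).
Hypothesis iw2 : leb.-integrable L (fun t => (t ^+ 2 * w t)%:E).

Let mwL : measurable_fun L w. Proof. exact: measurable_funTS. Qed.

Lemma integrable_mul_id : leb.-integrable L (fun t => (t * w t)%:E).
Proof.
apply: (le_integrable mL _ _ (integrableD mL iw iw2)).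
  by apply/measurable_EFinP; apply: measurable_funM.
move=> t _; rewrite -EFinD lee_fin normrM (ger0_norm (w_ge0 t)).
rewrite [X in _ <= X]ger0_norm; last by rewrite addr_ge0 // mulr_ge0 // sqr_ge0.
have sq_norm : `|t| ^+ 2 = t ^+ 2 by rewrite real_normK ?num_real.
have := mulr_ge0 (sqr_ge0 t) (w_ge0 t).
have := w_ge0 t; have := mulr_ge0 (sqr_ge0 (`|t| - 1)) (w_ge0 t); nra.
Qed.

Lemma integrable_sqdev (c : R) :
  leb.-integrable L (fun t => ((c - t) ^+ 2 * w t)%:E).
Proof.
apply: (le_integrable mL _ _
  (integrableD mL (integrableZl mL (2 * c ^+ 2) iw) (integrableZl mL 2 iw2))).
  apply/measurable_EFinP; apply: measurable_funM => //.
  by apply: measurable_funX; apply: measurable_funB.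
move=> t _; rewrite -!EFinM -EFinD lee_fin.
rewrite ger0_norm; last by rewrite mulr_ge0 // sqr_ge0.
rewrite ger0_norm; last by have := w_ge0 t; have := sqr_ge0 c; have := sqr_ge0 t; nra.
rewrite -subr_ge0 (_ : _ - _ = (c + t) ^+ 2 * w t); last by ring.
exact: mulr_ge0 (sqr_ge0 _) (w_ge0 t).
Qed.

Lemma sqdevE (c : R) : sqdev c = c ^+ 2 * mass - 2 * c * moment1 + moment2.
Proof.
have i0 : leb.-integrable L (EFin \o (fun t => c ^+ 2 * w t)).
  by apply: (eq_integrable mL _ _ _ (integrableZl mL _ iw)) => t _; rewrite /= EFinM.
have i1 : leb.-integrable L (EFin \o (fun t => - (2 * c) * (t * w t))).
  apply: (eq_integrable mL _ _ _ (integrableZl mL _ integrable_mul_id)).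
  by move=> t _; rewrite /= EFinM.
have i12 : leb.-integrable L
    (EFin \o (fun t => - (2 * c) * (t * w t) + t ^+ 2 * w t)).
  by apply: (eq_integrable mL _ _ _ (integrableD mL i1 iw2)) => t _; rewrite /= EFinD.
transitivity (\int[leb]_(t in L)
    (c ^+ 2 * w t + (- (2 * c) * (t * w t) + t ^+ 2 * w t))).
  by apply: eq_Rintegral => t _; ring.
rewrite (RintegralD mL i0 i12) (RintegralD mL i1 iw2) (RintegralZl _ mL iw).
rewrite (RintegralZl _ mL integrable_mul_id) /mass /moment1 /moment2; ring.
Qed.

Lemma sqdev_ge0 (c : R) : 0 <= sqdev c.
Proof. by apply: Rintegral_ge0 => t _; rewrite mulr_ge0 ?sqr_ge0. Qed.

(* Polarization: [moment1] is a difference of integrals of non-negative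
   functions, hence measurable in a parameter of [w]. *)
Lemma moment1_polarization : moment1 = (sqdev (-1) - sqdev 1) / 4.
Proof. by rewrite !sqdevE; field. Qed.

Lemma mass_eq0_moment2 : mass = 0 -> moment2 = 0.
Proof.
move=> m0.
have int_w0 : (\int[leb]_(t in L) (w t)%:E = 0)%E.
  rewrite -(fineK (integrable_fin_num mL iw)).
  by move: m0; rewrite /mass /Rintegral => ->.
have w_ae0 : ae_eq leb L (fun t => (w t)%:E) (cst 0%E).
  apply/(ae_eq_integral_abs leb mL); first exact/measurable_EFinP.
  by rewrite -int_w0; apply: eq_integral => t _; rewrite gee0_abs // lee_fin.
rewrite /moment2 /Rintegral (ae_eq_integral (cst 0%E)) ?integral0 //.
- by apply/measurable_EFinP; apply: measurable_funM.
- by apply: filterS w_ae0 => t /= + Lt => /(_ Lt) [->]; rewrite mulr0.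
Qed.

(* When [mass = 0], [moment1 / mass = 0] and [sqdev 0 = moment2 = 0]. *)
Lemma sqdev_mean_le (c : R) : sqdev (moment1 / mass) <= sqdev c.
Proof.
have [m0|m_neq0] := eqVneq mass 0.
  rewrite m0 invr0 mulr0 (_ : sqdev 0 = 0) ?sqdev_ge0 //.
  by rewrite sqdevE m0 mass_eq0_moment2 //; ring.
have m_gt0 : 0 < mass by rewrite lt0r m_neq0 Rintegral_ge0.
rewrite -subr_ge0 !sqdevE.
rewrite (_ : _ - _ = (c - moment1 / mass) ^+ 2 * mass); last by field.
by rewrite mulr_ge0 ?sqr_ge0 ?ltW.
Qed.

Lemma sqdev_mean_divfK :
  sqdev (moment1 / mass) / mass * mass = sqdev (moment1 / mass).
Proof.
have [m0|m_neq0] := eqVneq mass 0; last by rewrite divfK.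
by rewrite m0 invr0 !mulr0 sqdevE m0 mass_eq0_moment2 //; ring.
Qed.

End weighted_moments.

Lemma measurable_fun_integral_param (R : realType) (d : measure_display)
    (X : measurableType d) (L : set R) (g : X -> R -> R) :
  measurable (L : set (g_sigma_algebraType R.-ocitv.-measurable)) ->
  measurable_fun setT (fun z : X * R => g z.1 z.2) ->
  (forall x t, 0 <= g x t) ->
  measurable_fun setT (fun x => \int[lebesgue_measure]_(t in L) (g x t)%:E)%E.
Proof.
move=> mL mg g_ge0.
rewrite (_ : (fun x => _) =
    fubini_F lebesgue_measure (fun z => (g z.1 z.2 * \1_L z.2)%:E)); last first.
  apply/funext => x; rewrite /fubini_F [LHS]integral_mkcond.
  apply: eq_integral => t _; rewrite /patch indicE.
  by case: (t \in L); rewrite ?mulr1 ?mulr0.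
apply: measurable_fun_fubini_tonelli_F.
- apply/measurable_EFinP; apply: measurable_funM => //.
  exact: measurableT_comp measurable_snd.
- by move=> z; rewrite lee_fin mulr_ge0.
Qed.

Lemma measurable_fun_Rintegral_param (R : realType) (d : measure_display)
    (X : measurableType d) (L : set R) (g : X -> R -> R) :
  measurable (L : set (g_sigma_algebraType R.-ocitv.-measurable)) ->
  measurable_fun setT (fun z : X * R => g z.1 z.2) ->
  (forall x t, 0 <= g x t) ->
  measurable_fun setT (fun x => \int[lebesgue_measure]_(t in L) g x t).
Proof.
move=> mL mg g_ge0; apply: measurableT_comp; first exact: fine_measurable.
exact: measurable_fun_integral_param.
Qed.

Lemma measurable_inv (R : realType) : measurable_fun setT (@GRing.inv R).
Proof.
rewrite (_ : GRing.inv = fun x : R => if x == 0 then 0 else x^-1); last first.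
  by apply/funext => x; case: eqP => // ->; rewrite invr0.
apply: measurable_fun_if => //.
  by apply: measurable_fun_eqr => //; exact: measurable_cst.
rewrite (_ : _ `&` _ = ~` [set 0]); last first.
  by apply/seteqP; split => x /=; [move=> [_ /eqP] | move=> /eqP /negbTE ->].
apply: open_continuous_measurable_fun.
  by rewrite openC; apply: compact_closed; [exact: Rhausdorff | exact: compact_set1].
by move=> x /set_mem /= /eqP x_neq0; exact: inv_continuous.
Qed.

Section bayes_cost.
Context (R : realType) (d : measure_display) (X : measurableType d)
  (mu : {measure set X -> \bar R}) (PH lam mu_ : bool -> R)
  (Lam : bool -> set R) (prior : bool -> R -> R) (pD pE : bool -> R -> X -> R).
Notation leb := (@lebesgue_measure R).
Hypotheses (PH_ge0 : forall i, 0 <= PH i) (lam_ge0 : forall i, 0 <= lam i).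
Hypothesis mu_ge0 : forall i, 0 <= mu_ i.
Hypothesis mLam :
  forall i, measurable (Lam i : set (g_sigma_algebraType R.-ocitv.-measurable)).
Hypothesis prior_ge0 : forall i t, 0 <= prior i t.
Hypothesis mprior : forall i, measurable_fun [set: R] (prior i).
Hypothesis pD_ge0 : forall i t x, 0 <= pD i t x.
Hypothesis pE_ge0 : forall i t x, 0 <= pE i t x.
Hypothesis mpD : forall i, measurable_fun [set: R * X] (fun z => pD i z.1 z.2).
Hypothesis mpE : forall i, measurable_fun [set: R * X] (fun z => pE i z.1 z.2).
Hypothesis iE : forall i x,
  leb.-integrable (Lam i) (fun t => (pE i t x * prior i t)%:E).
Hypothesis iE2 : forall i x,
  leb.-integrable (Lam i) (fun t => (t ^+ 2 * pE i t x * prior i t)%:E).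

Definition post_weight i x t := pE i t x * prior i t.

Notation post_sqdev i x := (sqdev (Lam i) (post_weight i x)).

Lemma post_weight_ge0 i x t : 0 <= post_weight i x t.
Proof. exact: mulr_ge0. Qed.

Lemma post_sqdev_ge0 i x c : 0 <= post_sqdev i x c.
Proof. exact/sqdev_ge0/post_weight_ge0. Qed.

Lemma measurable_post_weight i x : measurable_fun setT (post_weight i x).
Proof.
apply: measurable_funM => //.
exact: (measurable_fun_pair1 (f := fun z : R * X => pE i z.1 z.2) x (mpE i)).
Qed.

Lemma integrable_sqr_post_weight i x :
  leb.-integrable (Lam i) (fun t => (t ^+ 2 * post_weight i x t)%:E).
Proof.
by apply: (eq_integrable (mLam i) _ _ _ (iE2 i x)) => t _; rewrite /post_weight mulrA.
Qed.

Lemma post_meanE i x :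
  post_mean Lam prior pE i x =
  moment1 (Lam i) (post_weight i x) / mass (Lam i) (post_weight i x).
Proof.
by congr (_ / _); apply: eq_Rintegral => t _; rewrite /post_weight mulrA.
Qed.

Lemma post_var_margE i x :
  post_var Lam prior pE i x * margE Lam prior pE i x =
  post_sqdev i x (post_mean Lam prior pE i x).
Proof.
rewrite /post_var (_ : \int[leb]_(t in Lam i) _ =
    post_sqdev i x (post_mean Lam prior pE i x)); last first.
  by apply: eq_Rintegral => t _; rewrite /post_weight; ring.
rewrite post_meanE; exact: sqdev_mean_divfK
  (mLam i) (post_weight_ge0 i x) (measurable_post_weight i x) (iE i x)
  (integrable_sqr_post_weight i x).
Qed.

Lemma post_var_margE_le i x c :
  post_var Lam prior pE i x * margE Lam prior pE i x <= post_sqdev i x c.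
Proof.
rewrite post_var_margE post_meanE; exact: sqdev_mean_le
  (mLam i) (post_weight_ge0 i x) (measurable_post_weight i x) (iE i x)
  (integrable_sqr_post_weight i x) c.
Qed.

Lemma measurable_post_weight_joint i :
  measurable_fun setT (fun z : X * R => post_weight i z.1 z.2).
Proof.
apply: measurable_funM.
  exact: measurableT_comp (mpE i) (@measurable_swap _ _ X R).
exact: measurableT_comp (mprior i) measurable_snd.
Qed.

Lemma measurable_post_sqdev i c :
  measurable_fun setT (fun x => post_sqdev i x c).
Proof.
apply: (measurable_fun_Rintegral_param
  (g := fun x t => (c - t) ^+ 2 * post_weight i x t)) => // [|x t].
  apply: measurable_funM; last exact: measurable_post_weight_joint.
  by apply: measurable_funX; apply: measurable_funB; last exact: measurable_snd.
by rewrite mulr_ge0 ?sqr_ge0 ?post_weight_ge0.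
Qed.

Lemma measurable_post_mean i : measurable_fun setT (post_mean Lam prior pE i).
Proof.
have mmass : measurable_fun setT (fun x => mass (Lam i) (post_weight i x)).
  apply: (measurable_fun_Rintegral_param (g := post_weight i)) => //.
  - exact: measurable_post_weight_joint.
  - exact: post_weight_ge0.
rewrite (_ : post_mean _ _ _ i = fun x =>
    (post_sqdev i x (-1) - post_sqdev i x 1) / 4 / mass (Lam i) (post_weight i x)).
  apply: measurable_funM; last by apply: measurableT_comp mmass; exact: measurable_inv.
  by apply: measurable_funM => //; apply: measurable_funB; apply: measurable_post_sqdev.
apply/funext => x; rewrite post_meanE; congr (_ / _).
exact: moment1_polarization (mLam i) (post_weight_ge0 i x)
  (measurable_post_weight i x) (iE i x) (integrable_sqr_post_weight i x).
Qed.

Definition D_at i c x : \bar R :=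
  ((PH (~~ i) * lam (~~ i))%:E * margD Lam prior pD (~~ i) x
   + (PH i * mu_ i * post_sqdev i x c)%:E)%E.

Lemma D_at_post_mean i x :
  D_at i (post_mean Lam prior pE i x) x = D_NP Lam prior pD pE PH lam mu_ i x.
Proof. by rewrite /D_at /D_NP -post_var_margE mulrA. Qed.

Lemma D_NP_le_at i x c : (D_NP Lam prior pD pE PH lam mu_ i x <= D_at i c x)%E.
Proof.
rewrite /D_NP /D_at -mulrA leeD2l // lee_fin ler_wpM2l ?mulr_ge0 //.
exact: post_var_margE_le.
Qed.

Definition alpha_dens i (delta : X -> R) x : \bar R :=
  (\int[leb]_(t in Lam i) (wD i delta x * pD i t x * prior i t)%:E)%E.

Definition beta_dens i (delta : X -> R) (thhat : bool -> X -> R) x : \bar R :=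
  (\int[leb]_(t in Lam i)
     (wE i delta x * (thhat i x - t) ^+ 2 * pE i t x * prior i t)%:E)%E.

Definition cost_dens (delta : X -> R) (thhat : bool -> X -> R) x : \bar R :=
  (\sum_(i : bool) ((PH i * lam i)%:E * alpha_dens i delta x
                    + (PH i * mu_ i)%:E * beta_dens i delta thhat x))%E.

Lemma margD_ge0 i x : (0 <= margD Lam prior pD i x)%E.
Proof. by apply: integral_ge0 => t _; rewrite lee_fin mulr_ge0. Qed.

Section decision_rule.
Variable delta : X -> R.
Hypothesis delta01 : forall x, 0 <= delta x <= 1.

Lemma wD_ge0 i x : 0 <= wD i delta x.
Proof. by have /andP[? ?] := delta01 x; case: i; rewrite /= ?subr_ge0. Qed.

Lemma wE_ge0 i x : 0 <= wE i delta x.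
Proof. by have /andP[? ?] := delta01 x; case: i; rewrite /= ?subr_ge0. Qed.

Lemma alpha_densE i x :
  alpha_dens i delta x = ((wD i delta x)%:E * margD Lam prior pD i x)%E.
Proof.
rewrite /alpha_dens /margD -ge0_integralZl_EFin ?wD_ge0 //.
- by apply: eq_integral => t _; rewrite -EFinM mulrA.
- by move=> t _; rewrite lee_fin mulr_ge0.
- apply/measurable_EFinP.
  apply: measurable_funM; last exact: measurable_funTS (mprior i).
  apply: measurable_funTS.
  exact: (measurable_fun_pair1 (f := fun z : R * X => pD i z.1 z.2) x (mpD i)).
Qed.

Lemma beta_densE thhat i x :
  beta_dens i delta thhat x = (wE i delta x * post_sqdev i x (thhat i x))%:E.
Proof.
have isq := integrable_sqdev (mLam i) (post_weight_ge0 i x)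
  (measurable_post_weight i x) (iE i x) (integrable_sqr_post_weight i x) (thhat i x).
transitivity (\int[leb]_(t in Lam i)
    ((wE i delta x)%:E * ((thhat i x - t) ^+ 2 * post_weight i x t)%:E))%E.
  by apply: eq_integral => t _; rewrite -EFinM /post_weight !mulrA.
by rewrite integralZl // -(fineK (integrable_fin_num (mLam i) isq)) -EFinM.
Qed.

Lemma cost_densE thhat x :
  cost_dens delta thhat x =
  ((delta x)%:E * D_at true (thhat true x) x
   + (1 - delta x)%:E * D_at false (thhat false x) x)%E.
Proof.
have /andP[d0 d1] := delta01 x.
have sq_ge0 := post_sqdev_ge0.
rewrite /cost_dens big_bool !alpha_densE !beta_densE /D_at.
have mD0_ge0 := margD_ge0 false x; have mD1_ge0 := margD_ge0 true x.
set mD0 := margD _ _ _ false x in mD0_ge0 *; set mD1 := margD _ _ _ true x in mD1_ge0 *.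
clearbody mD0 mD1; rewrite /=.
rewrite ge0_muleDr; last 2 first.
- by rewrite mule_ge0 // lee_fin mulr_ge0.
- by rewrite lee_fin !mulr_ge0.
rewrite ge0_muleDr; last 2 first.
- by rewrite mule_ge0 // lee_fin mulr_ge0.
- by rewrite lee_fin !mulr_ge0.
rewrite (muleCA (delta x)%:E) (muleCA (1 - delta x)%:E) -!EFinM.
rewrite (mulrCA (delta x)) (mulrCA (1 - delta x)).
by rewrite [LHS]addeACA [RHS]addeACA (addeC (_ * (_ * mD0))%E).
Qed.

Lemma alpha_dens_ge0 i x : (0 <= alpha_dens i delta x)%E.
Proof. by rewrite alpha_densE mule_ge0 ?lee_fin ?wD_ge0 ?margD_ge0. Qed.

Lemma beta_dens_ge0 thhat i x : (0 <= beta_dens i delta thhat x)%E.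
Proof. by rewrite beta_densE lee_fin mulr_ge0 ?wE_ge0 ?post_sqdev_ge0. Qed.

Lemma cost_dens_ge0 thhat x : (0 <= cost_dens delta thhat x)%E.
Proof.
apply: sume_ge0 => i _.
by rewrite adde_ge0 ?mule_ge0 ?lee_fin ?mulr_ge0 ?alpha_dens_ge0 ?beta_dens_ge0.
Qed.

Hypothesis mdelta : measurable_fun setT delta.

Lemma measurable_wD i : measurable_fun setT (wD i delta).
Proof. by case: i => //=; apply: measurable_funB. Qed.

Lemma measurable_wE i : measurable_fun setT (wE i delta).
Proof. by case: i => //=; apply: measurable_funB. Qed.

Lemma measurable_alpha_dens i : measurable_fun setT (alpha_dens i delta).
Proof.
apply: (measurable_fun_integral_param
  (g := fun x t => wD i delta x * pD i t x * prior i t)) => // [|x t].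
  apply: measurable_funM; first apply: measurable_funM.
  - exact: measurableT_comp (measurable_wD i) measurable_fst.
  - exact: measurableT_comp (mpD i) (@measurable_swap _ _ X R).
  - exact: measurableT_comp (mprior i) measurable_snd.
exact: mulr_ge0 (mulr_ge0 (wD_ge0 _ _) (pD_ge0 _ _ _)) (prior_ge0 _ _).
Qed.

Lemma measurable_beta_dens thhat i : measurable_fun setT (thhat i) ->
  measurable_fun setT (beta_dens i delta thhat).
Proof.
move=> mthhat.
apply: (measurable_fun_integral_param (g := fun x t =>
  wE i delta x * (thhat i x - t) ^+ 2 * pE i t x * prior i t)) => // [|x t].
  apply: measurable_funM; first apply: measurable_funM; first apply: measurable_funM.
  - exact: measurableT_comp (measurable_wE i) measurable_fst.
  - apply: measurable_funX; apply: measurable_funB; last exact: measurable_snd.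
    exact: measurableT_comp mthhat measurable_fst.
  - exact: measurableT_comp (mpE i) (@measurable_swap _ _ X R).
  - exact: measurableT_comp (mprior i) measurable_snd.
exact: mulr_ge0 (mulr_ge0 (mulr_ge0 (wE_ge0 _ _) (sqr_ge0 _)) (pE_ge0 _ _ _))
  (prior_ge0 _ _).
Qed.

Lemma measurable_cost_dens thhat : (forall i, measurable_fun setT (thhat i)) ->
  measurable_fun setT (cost_dens delta thhat).
Proof.
move=> mthhat; apply: emeasurable_sum => i; apply: emeasurable_funD.
- exact/emeasurable_funM/measurable_alpha_dens.
- exact/emeasurable_funM/measurable_beta_dens.
Qed.

Lemma J_NP_cost_dens thhat : (forall i, measurable_fun setT (thhat i)) ->
  J_NP mu Lam prior pD pE PH lam mu_ delta thhat =
  (\int[mu]_x cost_dens delta thhat x)%E.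
Proof.
move=> mthhat.
have mA i : measurable_fun setT (fun x => (PH i * lam i)%:E * alpha_dens i delta x)%E.
  by apply: emeasurable_funM => //; exact: measurable_alpha_dens.
have mB i : measurable_fun setT
    (fun x => (PH i * mu_ i)%:E * beta_dens i delta thhat x)%E.
  by apply: emeasurable_funM => //; exact: measurable_beta_dens.
have A_ge0 i x : (0 <= (PH i * lam i)%:E * alpha_dens i delta x)%E.
  by rewrite mule_ge0 ?lee_fin ?mulr_ge0 ?alpha_dens_ge0.
have B_ge0 i x : (0 <= (PH i * mu_ i)%:E * beta_dens i delta thhat x)%E.
  by rewrite mule_ge0 ?lee_fin ?mulr_ge0 ?beta_dens_ge0.
rewrite /cost_dens ge0_integral_sum //; last first.
- by move=> i x _; rewrite adde_ge0.
- by move=> i; apply: emeasurable_funD.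
apply: eq_bigr => i _; rewrite ge0_integralD //.
rewrite !ge0_integralZl_EFin ?mulr_ge0 //.
- by move=> x _; exact: beta_dens_ge0.
- exact: measurable_beta_dens.
- by move=> x _; exact: alpha_dens_ge0.
- exact: measurable_alpha_dens.
Qed.

End decision_rule.

Notation DNP i x := (D_NP Lam prior pD pE PH lam mu_ i x).

Lemma mine_D_NP_le_cost_dens (delta : X -> R) thhat x :
  (forall x, 0 <= delta x <= 1) ->
  (mine (DNP false x) (DNP true x) <= cost_dens delta thhat x)%E.
Proof.
move=> delta01; rewrite cost_densE //.
apply: le_trans (mine_le_convex _ _ (delta01 x)) _.
have /andP[d0 d1] := delta01 x.
by apply: leeD; apply: lee_wpmul2l; rewrite ?lee_fin ?subr_ge0 ?D_NP_le_at.
Qed.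

Section threshold_rule.
Variable delta_star : X -> R.
Hypothesis mdelta_star : measurable_fun setT delta_star.
Hypothesis delta_star01 : forall x, 0 <= delta_star x <= 1.
Hypothesis delta_star0 : forall x, (DNP false x < DNP true x)%E -> delta_star x = 0.
Hypothesis delta_star1 : forall x, (DNP false x > DNP true x)%E -> delta_star x = 1.

Lemma cost_dens_threshold_rule x :
  cost_dens delta_star (post_mean Lam prior pE) x = mine (DNP false x) (DNP true x).
Proof.
rewrite cost_densE // !D_at_post_mean.
exact: convex_eq_mine (delta_star01 x) (@delta_star0 x) (@delta_star1 x).
Qed.

Lemma J_NP_threshold_rule :
  J_NP mu Lam prior pD pE PH lam mu_ delta_star (post_mean Lam prior pE) =
  (\int[mu]_x mine (DNP false x) (DNP true x))%E.
Proof.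
rewrite J_NP_cost_dens //; last exact: measurable_post_mean.
by apply: eq_integral => x _; rewrite cost_dens_threshold_rule.
Qed.

Lemma J_NP_threshold_rule_le (delta : X -> R) (thhat : bool -> X -> R) :
  measurable_fun setT delta -> (forall x, 0 <= delta x <= 1) ->
  (forall i, measurable_fun setT (thhat i)) ->
  (J_NP mu Lam prior pD pE PH lam mu_ delta_star (post_mean Lam prior pE) <=
   J_NP mu Lam prior pD pE PH lam mu_ delta thhat)%E.
Proof.
move=> mdelta delta01 mthhat.
have mpost_mean := measurable_post_mean.
rewrite !J_NP_cost_dens //; apply: ge0_le_integral => //.
- by move=> x _; exact: cost_dens_ge0.
- exact: measurable_cost_dens.
- exact: measurable_cost_dens.
- by move=> x _; rewrite cost_dens_threshold_rule mine_D_NP_le_cost_dens.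
Qed.

End threshold_rule.

End bayes_cost.

Theorem theorem4 (R : realType) (d : measure_display) (X : measurableType d)
  (mu : {measure set X -> \bar R})
  (PH lam mu_ : bool -> R)
  (Lam : bool -> set R) (prior : bool -> R -> R)
  (pD pE : bool -> R -> X -> R)
  (delta_star : X -> R) :
  (* the reference measure dx is sigma-finite *)
  sigma_finite [set: X] mu ->
  (* prior probabilities of the hypotheses *)
  (forall i, 0 <= PH i) -> PH false + PH true = 1 ->
  (* non-negative cost coefficients *)
  (forall i, 0 <= lam i) -> (forall i, 0 <= mu_ i) ->
  (* parameter sets and prior densities p(theta_i | H_i) on Lam_i *)
  (forall i, measurable (Lam i)) ->
  (forall i t, 0 <= prior i t) ->
  (forall i, measurable_fun [set: R] (prior i)) ->
  (forall i, (\int[lebesgue_measure]_(t in Lam i) (prior i t)%:E = 1)%E) ->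
  (* the two families of densities pD_{i,theta}, pE_{i,theta} *)
  (forall i t x, 0 <= pD i t x) -> (forall i t x, 0 <= pE i t x) ->
  (forall i, measurable_fun [set: R * X] (fun z => pD i z.1 z.2)) ->
  (forall i, measurable_fun [set: R * X] (fun z => pE i z.1 z.2)) ->
  (forall i t, Lam i t -> (\int[mu]_x (pD i t x)%:E = 1)%E) ->
  (forall i t, Lam i t -> (\int[mu]_x (pE i t x)%:E = 1)%E) ->
  (* the posteriors built from pE have finite second moments (so that the
     posterior mean and variance exist) *)
  (forall i x, lebesgue_measure.-integrable (Lam i)
                 (fun t => (pE i t x * prior i t)%:E)) ->
  (forall i x, lebesgue_measure.-integrable (Lam i)
                 (fun t => (t ^+ 2 * pE i t x * prior i t)%:E)) ->
  (* the decision rule delta^star *)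
  measurable_fun [set: X] delta_star ->
  (forall x, 0 <= delta_star x <= 1) ->
  (forall x, (D_NP Lam prior pD pE PH lam mu_ false x
              < D_NP Lam prior pD pE PH lam mu_ true x)%E -> delta_star x = 0) ->
  (forall x, (D_NP Lam prior pD pE PH lam mu_ false x
              > D_NP Lam prior pD pE PH lam mu_ true x)%E -> delta_star x = 1) ->
  (* pi^star = (delta^star, posterior means) minimizes J^NP_u ... *)
  (forall (delta : X -> R) (thhat : bool -> X -> R),
     measurable_fun [set: X] delta ->
     (forall x, 0 <= delta x <= 1) ->
     (forall i, measurable_fun [set: X] (thhat i)) ->
     (forall i x, Lam i (thhat i x)) ->
     (J_NP mu Lam prior pD pE PH lam mu_ delta_star (post_mean Lam prior pE)
      <= J_NP mu Lam prior pD pE PH lam mu_ delta thhat)%E)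
  /\
  (* ... and its value is the integral of min(D_0, D_1) *)
  J_NP mu Lam prior pD pE PH lam mu_ delta_star (post_mean Lam prior pE)
  = (\int[mu]_x mine (D_NP Lam prior pD pE PH lam mu_ false x)
                     (D_NP Lam prior pD pE PH lam mu_ true x))%E.
Proof.
move=> _ PH_ge0 _ lam_ge0 mu_ge0 mLam prior_ge0 mprior _ pD_ge0 pE_ge0 mpD mpE _ _
  iE iE2 mdelta_star delta_star01 delta_star0 delta_star1.
split=> [delta thhat mdelta delta01 mthhat _|].
- exact: J_NP_threshold_rule_le.
- exact: J_NP_threshold_rule.
Qed.
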